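(* Assume $\mu$ is such that $\overline N=\sum_{N\ge0}N\lambda_{N,\mu}\in\mathbb{N}$. Then $$F(\overline N)\ge F_{\mathrm{gc}}(\mu)\ge F(\overline N)-\ln(1+\overline N)-1.$$
   Context: Fix a nondecreasing sequence $(E_j)_{j\ge0}$ of nonnegative reals. A configuration is a sequence $n=(n_0,n_1,\dots)$ of nonnegative integers with finitely many nonzero entries; $|n|=\sum_jn_j$ and $E(n)=\sum_jE_jn_j$. The canonical partition function is $Z(N)=\sum_{|n|=N}e^{-E(n)}$ and the canonical free energy is $F(N)=-\ln Z(N)$. The grand canonical partition function is $Z_{\mathrm{gc}}(\mu)=\sum_ne^{-(E(n)-\mu|n|)}$ (assumed finite, as are all $Z(N)$), $\lambda_{N,\mu}=Z(N)e^{\mu N}/Z_{\mathrm{gc}}(\mu)$, and the grand canonical free energy is $F_{\mathrm{gc}}(\mu)=\sum_{N\ge0}\lambda_{N,\mu}F(N)-S(\lambda)$ with $S(\lambda)=-\sum_{N\ge0}\lambda_{N,\mu}\ln\lambda_{N,\mu}$. *)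

From HB Require Import structures.
From mathcomp Require Import all_boot all_order all_algebra finmap.
From mathcomp Require Import all_classical all_reals all_analysis.

Set Implicit Arguments.
Unset Strict Implicit.
Unset Printing Implicit Defensive.

Import Order.TTheory GRing.Theory Num.Theory.
Import numFieldNormedType.Exports.
Local Open Scope classical_set_scope.
Local Open Scope ring_scope.

Definition cfg := {fsfun nat -> nat for fun => 0%N}.

Section Defs.
Variable R : realType.
Variable E : nat -> R.        (* the one-particle energies E_j *)

Definition cfg_size (n : cfg) : nat := (\sum_(j <- finsupp n) n j)%N.

Definition cfg_energy (n : cfg) : R := \sum_(j <- finsupp n) E j * (n j)%:R.

Definition Zcan_e (N : nat) : \bar R :=
  \esum_(n in [set n : cfg | cfg_size n = N]) (expR (- cfg_energy n))%:E.

(* Z(N) as a real number (meaningful under the finiteness assumption) *)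
Definition Zcan (N : nat) : R := fine (Zcan_e N).

Definition Fcan (N : nat) : R := - ln (Zcan N).

Definition Zgc_e (mu : R) : \bar R :=
  \esum_(n in [set: cfg]) (expR (- (cfg_energy n - mu * (cfg_size n)%:R)))%:E.

Definition Zgc (mu : R) : R := fine (Zgc_e mu).

Definition lam (mu : R) (N : nat) : R := Zcan N * expR (mu * N%:R) / Zgc mu.

Definition rsum (u : nat -> R) : R := limn (series u).

Definition entropy (mu : R) : R := - rsum (fun N => lam mu N * ln (lam mu N)).

Definition Fgc (mu : R) : R := rsum (fun N => lam mu N * Fcan N) - entropy mu.

End Defs.

From HB Require Import structures.
From mathcomp Require Import all_boot all_order all_algebra finmap.
From mathcomp Require Import all_classical all_reals all_analysis.
From mathcomp Require Import ring lra zify.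
Import Order.TTheory GRing.Theory Num.Theory.
Import numFieldNormedType.Exports.
Local Open Scope classical_set_scope.
Local Open Scope ring_scope.

Set Implicit Arguments.
Unset Strict Implicit.
Unset Printing Implicit Defensive.

(* Sorting configurations by particle number gives Z_gc(mu) = sum_N Z(N) e^(mu N),
   so lambda is a probability distribution on the naturals with mean Nbar, and
   F_gc(mu) = mu Nbar - ln Z_gc(mu) = F(Nbar) + ln lambda_Nbar <= F(Nbar).
   For the lower bound, Z is log-concave in N: restricted to finitely many modes
   it is an iterated convolution of geometric sequences. Hence so is lambda, and
   -ln lambda is convex; averaging its tangent at the mean gives
   -ln lambda_Nbar <= S(lambda), while Gibbs' inequality against the geometric
   law of mean Nbar gives S(lambda) <= ln (1 + Nbar) + 1. *)

Section RealSeries.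
Variable R : realType.
Implicit Types (u v : R ^nat) (l x y z : R).

Lemma limn_cvg_to u l : u @ \oo --> l -> limn u = l.
Proof. exact: cvg_lim. Qed.

Lemma ler_series_cvg_to v l : (forall n, 0 <= v n) -> series v @ \oo --> l ->
  forall n, series v n <= l.
Proof.
move=> v_ge0 vl n; rewrite -(limn_cvg_to vl); apply: nondecreasing_cvgn_le.
  by apply/nondecreasing_seqP => k; rewrite seriesSr lerDl.
exact: cvgP vl.
Qed.

Lemma cvg_lincomb u v l l' x y z : u @ \oo --> l -> v @ \oo --> l' ->
  (fun n => x * u n + y * v n + z) @ \oo --> x * l + y * l' + z.
Proof.
move=> ul vl; apply: cvgD; last exact: cvg_cst.
by apply: cvgD; apply: cvgM => //; exact: cvg_cst.
Qed.

End RealSeries.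

Lemma ln_le_subr1 (R : realType) (x : R) : 0 < x -> ln x <= x - 1.
Proof.
by move=> x_gt0; rewrite -[x in ln x](subrKC 1) le_ln1Dx // ltrBrDl subrr.
Qed.

Lemma gibbs_le (R : realType) (x q : R) : 0 < x -> 0 < q ->
  - (x * ln x) <= - (x * ln q) + q - x.
Proof.
move=> x_gt0 q_gt0.
have := ler_wpM2l (ltW x_gt0) (ln_le_subr1 (divr_gt0 q_gt0 x_gt0)).
rewrite ln_div ?posrE // mulrBr mulrBr mulr1 mulrCA mulfV ?gt_eqF // mulr1.
lra.
Qed.

Definition log_concave (R : numDomainType) (f : nat -> R) :=
  forall n, f n * f n.+2 <= f n.+1 ^+ 2.

(* The recursion says [h n = \sum_(k <= n) x ^+ k * f (n - k)]. *)
Lemma log_concave_conv_geometric (R : realFieldType) (f h : nat -> R) x :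
  0 <= x -> (forall n, 0 < f n) -> log_concave f ->
  h 0%N = f 0%N -> (forall n, h n.+1 = f n.+1 + x * h n) ->
  (forall n, 0 < h n) /\ log_concave h.
Proof.
move=> x_ge0 f_gt0 f_lc h0 hS.
have h_gt0 n : 0 < h n.
  elim: n => [|n IH]; first by rewrite h0.
  by have := f_gt0 n.+1; have := mulr_ge0 x_ge0 (ltW IH); rewrite hS; lra.
have ratio n : h n * f n.+2 <= h n.+1 * f n.+1.
  elim: n => [|n IH].
    have := f_lc 0%N.
    have := mulr_ge0 (mulr_ge0 x_ge0 (ltW (f_gt0 0%N))) (ltW (f_gt0 1%N)).
    rewrite hS h0; nra.
  have shifted : h n * f n.+3 <= h n.+1 * f n.+2.
    rewrite -(ler_pM2r (f_gt0 n.+2)).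
    have := ler_wpM2r (ltW (f_gt0 n.+3)) IH.
    have := ler_wpM2l (ltW (h_gt0 n.+1)) (f_lc n.+1).
    nra.
  have := f_lc n.+1; have := ler_wpM2l x_ge0 shifted.
  rewrite [h n.+2]hS [in h n.+1 * f n.+3]hS; nra.
split=> // n.
have sq : h n.+1 ^+ 2 = h n.+1 * f n.+1 + x * h n * h n.+1.
  by rewrite expr2 {2}hS; ring.
by rewrite sq [h n.+2]hS; have := ratio n; nra.
Qed.

Lemma log_concave_tilt (R : realFieldType) (f : nat -> R) r c :
  0 < r -> 0 < c -> log_concave f -> log_concave (fun n => f n * r ^+ n * c).
Proof.
move=> r_gt0 c_gt0 f_lc n.
have -> : f n * r ^+ n * c * (f n.+2 * r ^+ n.+2 * c)
    = f n * f n.+2 * (r ^+ n.+1 * c) ^+ 2 by rewrite !exprS; ring.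
have -> : (f n.+1 * r ^+ n.+1 * c) ^+ 2 = f n.+1 ^+ 2 * (r ^+ n.+1 * c) ^+ 2.
  by rewrite -mulrA exprMn.
by rewrite ler_pM2r ?f_lc // exprn_gt0 // mulr_gt0 // exprn_gt0.
Qed.

Lemma convex_seq_ge_tangent (R : realFieldType) (g : nat -> R) m N :
  (forall k, g k.+1 - g k <= g k.+2 - g k.+1) ->
  g m + (N%:R - m%:R) * (g m.+1 - g m) <= g N.
Proof.
move=> g_cvx; pose D k := g k.+1 - g k.
have D_mono : {homo D : i j / (i <= j)%N >-> i <= j} by apply/nondecreasing_seqP.
have [mN|Nm] := leqP m N.
  have : \sum_(m <= k < N) D m <= \sum_(m <= k < N) D k.
    by apply: ler_sum_nat => k /andP [mk _]; apply: D_mono.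
  rewrite telescope_sumr // sumr_const_nat -[_ *+ _]mulr_natr natrB //.
  by rewrite /D; lra.
have : \sum_(N <= k < m) D k <= \sum_(N <= k < m) D m.
  by apply: ler_sum_nat => k /andP [_ km]; apply/D_mono/ltnW.
rewrite telescope_sumr ?(ltnW Nm) // sumr_const_nat -[_ *+ _]mulr_natr.
rewrite natrB ?(ltnW Nm) //.
by rewrite /D; lra.
Qed.

Section Distribution.
Variables (R : realType) (p : nat -> R) (m : nat).
Hypothesis p_gt0 : forall N, 0 < p N.
Hypothesis p_sum : series p @ \oo --> (1 : R).
Hypothesis p_mean : series (fun N => N%:R * p N) @ \oo --> (m%:R : R).

Let P := series p.
Let M := series (fun N => N%:R * p N).
Let S := series (fun N => p N * ln (p N)).

Lemma mass_le1 n : P n <= 1.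
Proof. exact: ler_series_cvg_to (fun N => ltW (p_gt0 N)) p_sum n. Qed.

Lemma partial_mean_le n : M n <= m%:R.
Proof.
by apply: ler_series_cvg_to p_mean n => N; rewrite mulr_ge0 // ltW.
Qed.

Lemma prob_le1 N : p N <= 1.
Proof.
apply: le_trans (mass_le1 N.+1).
by rewrite /P seriesSr lerDr sumr_ge0 // => k _; rewrite ltW.
Qed.

Lemma mean_gt0 : (0 < m)%N.
Proof.
have := p_gt0 1; have := partial_mean_le 2.
rewrite /M /series /= big_nat_recr //= big_nat1 mul0r mul1r add0r -(ltr0n R).
by move=> p1_le p1_gt0; apply: lt_le_trans p1_le.
Qed.

(* Gibbs' inequality against the geometric distribution [(1 - a) a ^+ N]. *)
Lemma entropy_series_le a n : 0 < a < 1 ->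
  - S n <= (- ln (1 - a) - 1) * P n + - ln a * M n + 1.
Proof.
move=> /andP [a_gt0 a_lt1].
have q_gt0 N : 0 < (1 - a) * a ^+ N by rewrite mulr_gt0 ?subr_gt0 ?exprn_gt0.
have q_sum : series (fun N => (1 - a) * a ^+ N) n = 1 - a ^+ n.
  elim: n => [|n IH]; first by rewrite /series /= big_geq // expr0 subrr.
  by rewrite seriesSr IH exprS; ring.
have q_sum_le : series (fun N => (1 - a) * a ^+ N) n <= 1.
  by rewrite q_sum lerBlDr lerDl exprn_ge0 // ltW.
apply: le_trans (_ : _ <= - ln (1 - a) * P n - ln a * M n
    + (series (fun N => (1 - a) * a ^+ N) n - P n)) _; last by lra.
rewrite /S /P /M /series /= -sumrN !mulr_sumr -sumrB -!sumrN -!big_split /=.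
apply: ler_sum => N _; apply: le_trans (gibbs_le (p_gt0 N) (q_gt0 N)) _.
rewrite lnM ?posrE ?subr_gt0 ?exprn_gt0 // lnXn // mulr_natl; lra.
Qed.

Lemma is_cvg_series_plogp : cvgn S.
Proof.
apply: nonincreasing_is_cvgn.
  apply/nonincreasing_seqP => n; rewrite /S seriesSr gerDl.
  by rewrite pmulr_rle0 ?p_gt0 // ln_le0 // prob_le1.
pose a : R := 2^-1.
have a01 : 0 < a < 1 by apply/andP; split; rewrite /a; lra.
have ln_a : ln a <= 0 by apply: ln_le0; rewrite /a; lra.
have ln_1a : ln (1 - a) <= 0 by apply: ln_le0; rewrite /a; lra.
exists (ln (1 - a) + ln a * m%:R - 1) => _ [n _ <-].
have := entropy_series_le n a01; have := mass_le1 n; have := partial_mean_le n.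
have : 0 <= P n by apply: sumr_ge0 => N _; rewrite ltW.
move=> *; nra.
Qed.

Let negS_cvg : (fun n => - S n) @ \oo --> - rsum (fun N => p N * ln (p N)).
Proof. exact: cvgN is_cvg_series_plogp. Qed.

Lemma entropy_le_geometric a : 0 < a < 1 ->
  - rsum (fun N => p N * ln (p N)) <= - ln (1 - a) - m%:R * ln a.
Proof.
move=> a01.
suff : - rsum (fun N => p N * ln (p N))
    <= (- ln (1 - a) - 1) * 1 + - ln a * m%:R + 1 by lra.
apply: ler_cvg_to negS_cvg (cvg_lincomb p_sum p_mean) _.
by apply: nearW => n; exact: entropy_series_le.
Qed.

(* [a = m / (1 + m)] is the ratio of the geometric law of mean [m]. *)
Lemma entropy_le_ln_mean : - rsum (fun N => p N * ln (p N)) <= ln (1 + m%:R) + 1.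
Proof.
have m_gt0 : (0 : R) < m%:R by rewrite ltr0n mean_gt0.
have m1_gt0 : (0 : R) < 1 + m%:R by rewrite addr_gt0.
pose a : R := m%:R / (1 + m%:R).
have a_gt0 : 0 < a by rewrite divr_gt0.
have a01 : 0 < a < 1 by rewrite a_gt0 /a ltr_pdivrMr // mul1r; lra.
apply: le_trans (entropy_le_geometric a01) _.
have -> : 1 - a = (1 + m%:R)^-1 by rewrite /a; field; rewrite gt_eqF.
have := ln_le_subr1 (_ : 0 < a^-1); rewrite invr_gt0 => /(_ a_gt0).
have -> : a^-1 - 1 = m%:R^-1 by rewrite /a; field; rewrite !gt_eqF.
rewrite !lnV ?posrE ?invr_gt0 // => /(ler_wpM2l (ltW m_gt0)).
by rewrite mulfV ?gt_eqF //; lra.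
Qed.

Hypothesis p_lc : log_concave p.

Lemma neg_ln_convex k :
  - ln (p k.+1) - - ln (p k) <= - ln (p k.+2) - - ln (p k.+1).
Proof.
have := p_lc k; rewrite -ler_ln ?posrE ?mulr_gt0 ?exprn_gt0 //.
by rewrite lnM ?posrE // lnXn // mulr2n; lra.
Qed.

(* [- ln p] is convex, so it lies above its tangent at the mean [m]; averaging
   against [p] kills the slope term. *)
Lemma neg_ln_mean_le_entropy : - ln (p m) <= - rsum (fun N => p N * ln (p N)).
Proof.
pose g N := - ln (p N); pose D := g m.+1 - g m.
have tangent_le_entropy n : (g m - D * m%:R) * P n + D * M n + 0 <= - S n.
  rewrite /S /P /M /series /= -sumrN !mulr_sumr addr0 -big_split /=.
  apply: ler_sum => N _; have := convex_seq_ge_tangent m N neg_ln_convex.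
  rewrite -/(g N) -/(g m) -/(g m.+1) -/D => tangent.
  have := ler_wpM2l (ltW (p_gt0 N)) tangent; rewrite /g; lra.
suff : (g m - D * m%:R) * 1 + D * m%:R + 0 <= - rsum (fun N => p N * ln (p N)).
  by rewrite /g; lra.
apply: ler_cvg_to (cvg_lincomb p_sum p_mean) negS_cvg _.
exact: nearW.
Qed.

End Distribution.

Definition supp_below (K : nat) (n : cfg) := forall j, (K <= j)%N -> n j = 0%N.

Lemma supp_below_le K K' n : (K <= K')%N -> supp_below K n -> supp_below K' n.
Proof. by move=> KK' n0 j K'j; apply: n0; exact: leq_trans K'j. Qed.

Lemma supp_below_seq (s : seq cfg) K0 :
  exists2 K, (K0 <= K)%N & forall n, n \in s -> supp_below K n.
Proof.
elim: s => [|n s [K K0K IH]]; first by exists K0.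
pose b := (\max_(j <- finsupp n) j).+1.
exists (maxn K b); first by rewrite (leq_trans K0K) // leq_maxl.
move=> n'; rewrite inE => /predU1P [->|n's]; last first.
  by apply: (supp_below_le (leq_maxl K b)); apply: IH.
apply: (supp_below_le (leq_maxr K b)) => j bj.
apply/eqP; apply: contraTT bj => nj; rewrite -ltnNge ltnS.
by apply: (leq_bigmax_seq (F := id)) => //; rewrite mem_finsupp.
Qed.

Lemma big_finsupp_ord (V : Type) (idx : V) (op : Monoid.com_law idx) (n : cfg) K
    (g : nat -> nat -> V) :
  supp_below K n -> (forall j, g j 0%N = idx) ->
  \big[op/idx]_(j <- finsupp n) g j (n j) = \big[op/idx]_(j < K) g j (n j).
Proof.
move=> n0 g0.
rewrite -(big_mkord xpredT (fun j => g j (n j))) /index_iota subn0.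
rewrite -(@big_rmcond_in _ _ _ _ (iota 0 K) (mem (finsupp n))) /=; last first.
  by move=> j _; rewrite mem_finsupp negbK => /eqP ->.
rewrite -[in RHS]big_filter; apply: perm_big.
apply: uniq_perm; [exact: fset_uniq | by rewrite filter_uniq ?iota_uniq |].
move=> j; rewrite mem_filter mem_iota /= add0n andbC.
case jn: (j \in finsupp n); rewrite ?andbF ?andbT //; symmetry.
by rewrite ltnNge; apply/negP => /n0; move: jn; rewrite mem_finsupp => /eqP.
Qed.

Lemma cfg_size_ord K n : supp_below K n -> cfg_size n = (\sum_(j < K) n j)%N.
Proof. by move=> n0; rewrite /cfg_size (big_finsupp_ord (g := fun _ k => k) _ n0). Qed.

Fixpoint cfgs (K N : nat) : seq cfg :=
  if K is K'.+1 then
    [seq [fsfun n with K' |-> k] | k <- iota 0 N.+1, n <- cfgs K' (N - k)]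
  else if N == 0%N then [:: [fsfun]] else [::].

Lemma mem_cfgs K N n :
  n \in cfgs K N <-> supp_below K n /\ (\sum_(j < K) n j)%N = N.
Proof.
elim: K N n => [|K IH] N n.
  rewrite /= big_ord0; split.
    by case: eqP => // ->; rewrite inE => /eqP ->; split=> // j _; rewrite fsfunE.
  by move=> [n0 <-]; rewrite inE; apply/eqP/fsfunP => j; rewrite fsfunE n0.
have sumE (n' : cfg) k :
    (\sum_(j < K) [fsfun n' with K |-> k] j = \sum_(j < K) n' j)%N.
  by apply: eq_bigr => j _; rewrite fsfun_withE ltn_eqF.
split.
  case/allpairsPdep => k [n' [kN /IH [n'0 sn'] ->]].
  split=> [j Kj|]; first by rewrite fsfun_withE gtn_eqF // n'0 // ltnW.
  rewrite big_ord_recr /= sumE fsfun_withE eqxx sn' subnK //.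
  by move: kN; rewrite mem_iota ltnS.
move=> [n0 sn]; rewrite big_ord_recr /= in sn.
have -> : n = [fsfun [fsfun n with K |-> 0%N] with K |-> n K].
  by apply/fsfunP => j; rewrite !fsfun_withE; case: eqP => // ->.
apply: (allpairs_f_dep (fun k (n' : cfg) => [fsfun n' with K |-> k])).
  by rewrite mem_iota ltnS -sn leq_addl.
apply/IH; split; last by rewrite sumE -sn addnK.
move=> j Kj; rewrite fsfun_withE; case: eqP => // /eqP jK.
by apply: n0; rewrite ltn_neqAle eq_sym jK.
Qed.

Lemma uniq_cfgs K N : uniq (cfgs K N).
Proof.
elim: K N => [|K IH] N; first by rewrite /=; case: eqP.
apply: allpairs_uniq_dep => [|k _|]; [exact: iota_uniq | exact: IH |].
move=> p1 p2 /allpairsPdep [k1 [n1 [_ /mem_cfgs [n10 _] ->]]].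
move=> /allpairsPdep [k2 [n2 [_ /mem_cfgs [n20 _] ->]]] /= eqn.
have ek : k1 = k2 by have := congr1 (fun n : cfg => n K) eqn; rewrite !fsfun_withE eqxx.
subst k2; congr Tagged; apply/fsfunP => j.
have := congr1 (fun n : cfg => n j) eqn; rewrite !fsfun_withE.
by case: eqP => [->|] //; rewrite n10 ?n20.
Qed.

Section TruncatedPartitionFunction.
Variables (R : realType) (E : nat -> R).

Definition cfg_weight (n : cfg) : R := expR (- cfg_energy E n).

Lemma cfg_weight_ge0 n : 0 <= cfg_weight n.
Proof. exact: expR_ge0. Qed.

Lemma cfg_energy_ord K n :
  supp_below K n -> cfg_energy E n = \sum_(j < K) E j * (n j)%:R.
Proof.
move=> n0; rewrite /cfg_energy (big_finsupp_ord (g := fun j k => E j * k%:R) _ n0) //.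
by move=> j; rewrite mulr0.
Qed.

Lemma cfg_weight_with K n k : supp_below K n ->
  cfg_weight [fsfun n with K |-> k] = expR (- (E K * k%:R)) * cfg_weight n.
Proof.
move=> n0; have nk0 : supp_below K.+1 [fsfun n with K |-> k].
  by move=> j Kj; rewrite fsfun_withE gtn_eqF // n0 // ltnW.
rewrite /cfg_weight (cfg_energy_ord nk0) (cfg_energy_ord n0) big_ord_recr /=.
rewrite fsfun_withE eqxx -expRD opprD addrC; congr (expR (- _ - _)).
by apply: eq_bigr => j _; rewrite fsfun_withE ltn_eqF.
Qed.

Definition Ztrunc (K N : nat) : R := \sum_(n <- cfgs K N) cfg_weight n.

Lemma Ztrunc0 N : Ztrunc 0 N = (N == 0%N)%:R.
Proof.
rewrite /Ztrunc /=; case: eqP => _; rewrite ?big_nil // big_seq1 /cfg_weight.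
by rewrite (@cfg_energy_ord 0) ?big_ord0 ?oppr0 ?expR0 // => j _; rewrite fsfunE.
Qed.

Lemma ZtruncS K N :
  Ztrunc K.+1 N = \sum_(k < N.+1) expR (- (E K * k%:R)) * Ztrunc K (N - k).
Proof.
rewrite -(big_mkord xpredT (fun k => expR (- (E K * k%:R)) * Ztrunc K (N - k))).
rewrite /Ztrunc big_allpairs_dep /index_iota subn0.
apply: eq_bigr => k _; rewrite mulr_sumr big_seq [RHS]big_seq.
by apply: eq_bigr => n /mem_cfgs [n0 _]; rewrite cfg_weight_with.
Qed.

Lemma ZtruncS0 K : Ztrunc K.+1 0 = Ztrunc K 0.
Proof. by rewrite ZtruncS big_ord1 /= mulr0 oppr0 expR0 mul1r. Qed.

Lemma ZtruncSS K N :
  Ztrunc K.+1 N.+1 = Ztrunc K N.+1 + expR (- E K) * Ztrunc K.+1 N.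
Proof.
rewrite !ZtruncS big_ord_recl /= mulr0 oppr0 expR0 mul1r subn0 mulr_sumr.
congr (_ + _); apply: eq_bigr => k _.
rewrite /bump /= add1n subSS mulrA -expRD -addn1 natrD; congr (expR _ * _); ring.
Qed.

Lemma Ztrunc1 N : Ztrunc 1 N = expR (- E 0%N) ^+ N.
Proof.
elim: N => [|N IH]; first by rewrite ZtruncS0 Ztrunc0.
by rewrite ZtruncSS Ztrunc0 IH add0r exprS.
Qed.

Lemma Ztrunc_log_concave K : (0 < K)%N ->
  (forall N, 0 < Ztrunc K N) /\ log_concave (Ztrunc K).
Proof.
case: K => // K _; elim: K => [|K [Z_gt0 Z_lc]].
  split=> N; rewrite !Ztrunc1 ?exprn_gt0 ?expR_gt0 //.
  by rewrite -exprD -exprM (_ : N + N.+2 = N.+1 * 2)%N //; lia.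
apply: (log_concave_conv_geometric (x := expR (- E K.+1))) => //.
- exact: ZtruncS0.
- by move=> n; rewrite ZtruncSS.
Qed.

End TruncatedPartitionFunction.

Lemma ler_sum_subset (R : numDomainType) (I : eqType) (s t : seq I)
    (F : I -> R) :
  uniq s -> uniq t -> {subset s <= t} -> (forall i, 0 <= F i) ->
  \sum_(i <- s) F i <= \sum_(i <- t) F i.
Proof.
move=> s_uniq t_uniq st F_ge0.
have s_perm : perm_eq s [seq i <- t | i \in s].
  apply: uniq_perm; rewrite ?filter_uniq // => i.
  by rewrite mem_filter andb_idr //; apply: st.
rewrite (perm_big _ s_perm) big_filter [X in _ <= X](bigID (mem s)) /=.
by rewrite lerDl sumr_ge0.
Qed.

Section CanonicalPartitionFunction.
Variables (R : realType) (E : nat -> R) (N : nat).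
Hypothesis Z_fin : (Zcan_e E N < +oo)%E.

Lemma Zcan_eE : Zcan_e E N = (Zcan E N)%:E.
Proof.
rewrite /Zcan fineK // ge0_fin_numE //.
by apply: esum_ge0 => n _; rewrite lee_fin expR_ge0.
Qed.

Lemma Zcan_ge_sum s : uniq s -> {in s, forall n, cfg_size n = N} ->
  \sum_(n <- s) cfg_weight E n <= Zcan E N.
Proof.
move=> s_uniq s_size; rewrite -lee_fin -Zcan_eE -sumEFin fsbig_seq //.
apply: esum_ge; exists [set` s] => //; split; first exact: finite_seq.
by move=> n /= /s_size.
Qed.

Lemma Zcan_le_sum B :
  (forall s, uniq s -> {in s, forall n, cfg_size n = N} ->
     \sum_(n <- s) cfg_weight E n <= B) -> Zcan E N <= B.
Proof.
move=> sum_le; rewrite -lee_fin -Zcan_eE /Zcan_e /esum.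
apply: ge_ereal_sup => _ [X [X_fin X_size] <-].
rewrite fsbig_finite // sumEFin lee_fin; apply: sum_le; first exact: fset_uniq.
by move=> n; rewrite in_fset_set // => /set_mem /X_size.
Qed.

Lemma Ztrunc_le_Zcan K : Ztrunc E K N <= Zcan E N.
Proof.
apply: Zcan_ge_sum; first exact: uniq_cfgs.
by move=> n /mem_cfgs [n0 <-]; rewrite (cfg_size_ord n0).
Qed.

Lemma Zcan_gt0 : 0 < Zcan E N.
Proof.
apply: lt_le_trans (Ztrunc_le_Zcan 1).
by have [] := Ztrunc_log_concave E (isT : 0 < 1)%N.
Qed.

End CanonicalPartitionFunction.

Lemma sum_le_Ztrunc (R : realType) (E : nat -> R) N K s : uniq s ->
  {in s, forall n, cfg_size n = N} -> {in s, forall n, supp_below K n} ->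
  \sum_(n <- s) cfg_weight E n <= Ztrunc E K N.
Proof.
move=> s_uniq s_size s0.
apply: ler_sum_subset; [done | exact: uniq_cfgs | | exact: cfg_weight_ge0].
move=> n ns; apply/mem_cfgs; split; first exact: s0.
by rewrite -(cfg_size_ord (s0 _ ns)) s_size.
Qed.

(* Finite families live in finitely many modes, where [Ztrunc] is log-concave. *)
Lemma sum_cfg_weight_mul_le (R : realType) (E : nat -> R) N s t :
  (forall N, (Zcan_e E N < +oo)%E) -> uniq s -> uniq t ->
  {in s, forall n, cfg_size n = N} -> {in t, forall n, cfg_size n = N.+2} ->
  (\sum_(n <- s) cfg_weight E n) * (\sum_(n <- t) cfg_weight E n)
    <= Zcan E N.+1 ^+ 2.
Proof.
move=> Z_fin s_uniq t_uniq s_size t_size.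
have [K K_gt0 st0] := supp_below_seq (s ++ t) 1.
have [Zt_gt0 Zt_lc] := Ztrunc_log_concave E K_gt0.
apply: (le_trans (y := Ztrunc E K N * Ztrunc E K N.+2)).
  have sum_ge0 (u : seq cfg) : 0 <= \sum_(n <- u) cfg_weight E n.
    by rewrite sumr_ge0 // => n _; exact: cfg_weight_ge0.
  apply: ler_pM; rewrite ?sum_ge0 //.
    by apply: sum_le_Ztrunc => // n ns; apply: st0; rewrite mem_cat ns.
  by apply: sum_le_Ztrunc => // n nt; apply: st0; rewrite mem_cat nt orbT.
apply: (le_trans (Zt_lc N)); rewrite !expr2.
by apply: ler_pM; rewrite ?(ltW (Zt_gt0 _)) ?(Ztrunc_le_Zcan (Z_fin N.+1)).
Qed.

Lemma Zcan_log_concave (R : realType) (E : nat -> R) :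
  (forall N, (Zcan_e E N < +oo)%E) -> log_concave (Zcan E).
Proof.
move=> Z_fin N; have ZN_gt0 := Zcan_gt0 (Z_fin N).
rewrite mulrC -ler_pdivlMr //; apply: Zcan_le_sum => // t t_uniq t_size.
rewrite ler_pdivlMr // mulrC.
have [->|T_neq0] := eqVneq (\sum_(n <- t) cfg_weight E n) 0.
  by rewrite mulr0 exprn_ge0 // ltW // Zcan_gt0.
have T_gt0 : 0 < \sum_(n <- t) cfg_weight E n.
  by rewrite lt_def T_neq0 sumr_ge0 // => n _; rewrite cfg_weight_ge0.
rewrite -ler_pdivlMr //; apply: Zcan_le_sum => // s s_uniq s_size.
by rewrite ler_pdivlMr // sum_cfg_weight_mul_le.
Qed.

Lemma ge0_esumZl (R : realType) (T : choiceType) (S : set T) (a : T -> \bar R)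
    (r : R) :
  0 <= r -> (forall x, 0 <= a x)%E ->
  (\esum_(i in S) (r%:E * a i) = r%:E * \esum_(i in S) a i)%E.
Proof.
move=> r_ge0 a_ge0; rewrite /esum -ereal_supZl //; last first.
  by apply/set0P; exists 0%E, set0; [exact: fsets_set0 | rewrite fsbig_set0].
congr ereal_sup; apply/seteqP; split => x /=.
  move=> [A SA <-]; exists (\sum_(i \in A) a i)%E; first by exists A.
  by rewrite ge0_mule_fsumr.
by move=> [y [A SA <-] <-]; exists A => //; rewrite ge0_mule_fsumr.
Qed.

Section GrandCanonical.
Variables (R : realType) (E : nat -> R) (mu : R).
Hypothesis Z_fin : forall N, (Zcan_e E N < +oo)%E.

(* Sort the configurations by their number of particles. *)
Lemma Zgc_eE :
  Zgc_e E mu = (\sum_(N <oo) (Zcan E N * expR (mu * N%:R))%:E)%E.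
Proof.
rewrite /Zgc_e (_ : [set: cfg] = \bigcup_N [set n | cfg_size n = N]); last first.
  by apply/seteqP; split => n //= _; exists (cfg_size n).
rewrite nneseries_sum_bigcup; last 2 first.
- by move=> i j _ _ [n [/= <- <-]].
- by move=> n; rewrite lee_fin expR_ge0.
apply: eq_eseriesr => N _; rewrite EFinM muleC -(Zcan_eE (Z_fin N)).
rewrite -ge0_esumZl ?expR_ge0 //.
by apply: eq_esum => n /= <-; rewrite -EFinM -expRD opprB addrC.
Qed.

Hypothesis Zgc_fin : (Zgc_e E mu < +oo)%E.

Lemma gc_weight_gt0 N : 0 < Zcan E N * expR (mu * N%:R).
Proof. by rewrite mulr_gt0 ?expR_gt0 ?Zcan_gt0. Qed.

Lemma series_Zgc :
  series (fun N => Zcan E N * expR (mu * N%:R)) @ \oo --> Zgc E mu.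
Proof.
have Zgc_fin_num : Zgc_e E mu \is a fin_num.
  by rewrite ge0_fin_numE // esum_ge0 // => n _; rewrite lee_fin expR_ge0.
have := is_cvg_nneseries (P := xpredT) (N := 0%N)
  (u_ := fun N => (Zcan E N * expR (mu * N%:R))%:E)
  (fun N _ _ => ltW (gc_weight_gt0 N)).
rewrite -Zgc_eE -[X in _ --> X](fineK Zgc_fin_num) => Zgc_e_cvg.
suff /fine_cvgP [_] : (fun n => (series (fun N => Zcan E N * expR (mu * N%:R)) n)%:E)
    @ \oo --> (Zgc E mu)%:E.
  by apply: cvg_trans; apply: near_eq_cvg; apply: nearW.
apply: cvg_trans Zgc_e_cvg; apply: near_eq_cvg; apply: nearW => n.
by rewrite /series /= sumEFin.
Qed.

Lemma Zgc_gt0 : 0 < Zgc E mu.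
Proof.
apply: lt_le_trans
  (ler_series_cvg_to (fun N => ltW (gc_weight_gt0 N)) series_Zgc 1).
by rewrite /series /= big_nat1 gc_weight_gt0.
Qed.

Lemma lam_gt0 N : 0 < lam E mu N.
Proof. by rewrite divr_gt0 ?gc_weight_gt0 ?Zgc_gt0. Qed.

Lemma lam_log_concave : log_concave (lam E mu).
Proof.
have -> : lam E mu = fun N => Zcan E N * expR mu ^+ N * (Zgc E mu)^-1.
  by apply/funext => N; rewrite /lam expRM_natr.
apply: log_concave_tilt; [exact: expR_gt0 | by rewrite invr_gt0 Zgc_gt0 |].
exact: Zcan_log_concave.
Qed.

Lemma series_lam : series (lam E mu) @ \oo --> (1 : R).
Proof.
rewrite -(mulfV (lt0r_neq0 Zgc_gt0)).
have -> : series (lam E mu) =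
    fun n => series (fun N => Zcan E N * expR (mu * N%:R)) n * (Zgc E mu)^-1.
  by apply/funext => n; rewrite /series /= mulr_suml.
by apply: cvgM series_Zgc _; exact: cvg_cst.
Qed.

Lemma Fcan_lam N : Fcan E N = - ln (lam E mu N) + mu * N%:R - ln (Zgc E mu).
Proof.
rewrite /Fcan /lam ln_div ?posrE ?gc_weight_gt0 ?Zgc_gt0 //.
by rewrite lnM ?posrE ?expR_gt0 ?Zcan_gt0 // expRK; ring.
Qed.

Variable Nbar : nat.
Hypothesis lam_mean : series (fun N => N%:R * lam E mu N) @ \oo --> (Nbar%:R : R).

Lemma Fgc_mean : Fgc E mu = mu * Nbar%:R - ln (Zgc E mu).
Proof.
have series_lamFcan : series (fun N => lam E mu N * Fcan E N) = (fun n =>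
    mu * series (fun N => N%:R * lam E mu N) n + - ln (Zgc E mu) * series (lam E mu) n
    + 0) - series (fun N => lam E mu N * ln (lam E mu N)).
  apply/funext => n; rewrite /series fctE /= addr0 !mulr_sumr -big_split -sumrB /=.
  by apply: eq_bigr => N _; rewrite Fcan_lam; ring.
have lamFcan_cvg : series (fun N => lam E mu N * Fcan E N) @ \oo -->
    mu * Nbar%:R + - ln (Zgc E mu) * 1 + 0
      - rsum (fun N => lam E mu N * ln (lam E mu N)).
  rewrite series_lamFcan; apply: cvgB; first exact: cvg_lincomb lam_mean series_lam.
  exact: is_cvg_series_plogp lam_gt0 series_lam lam_mean.
by rewrite /Fgc /entropy {1}/rsum (limn_cvg_to lamFcan_cvg); ring.
Qed.

End GrandCanonical.

Theorem corollaryA2 (R : realType) (E : nat -> R) (mu : R) (Nbar : nat) :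
  (forall j, 0 <= E j) ->
  {homo E : i j / (i <= j)%N >-> i <= j} ->
  (forall N, (Zcan_e E N < +oo)%E) ->
  (Zgc_e E mu < +oo)%E ->
  (* Nbar = sum_N N lambda_{N,mu}, the series converging to the natural number Nbar *)
  series (fun N => N%:R * lam E mu N) @ \oo --> (Nbar%:R : R) ->
  Fgc E mu <= Fcan E Nbar /\
  Fcan E Nbar - ln (1 + Nbar%:R) - 1 <= Fgc E mu.
Proof.
move=> _ _ Z_fin Zgc_fin lam_mean.
have lam_pos := lam_gt0 Z_fin Zgc_fin.
have lam_sum := series_lam Z_fin Zgc_fin.
have lam_le1 : ln (lam E mu Nbar) <= 0 by rewrite ln_le0 // prob_le1.
have := neg_ln_mean_le_entropy lam_pos lam_sum lam_mean
  (lam_log_concave Z_fin Zgc_fin).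
have := entropy_le_ln_mean lam_pos lam_sum lam_mean.
rewrite (Fgc_mean Z_fin Zgc_fin lam_mean) (Fcan_lam Z_fin Zgc_fin); lra.
Qed.
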